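(* Let $v_j\neq v_k$ be values and $X_1,\dots,X_n$ finite domain variables. Introduce 0/1 variables $B_1,\dots,B_{n+1}$ with $B_1=0$, and for each $1\le i\le n$ the ternary constraint $C(X_i,B_i,B_{i+1})$ which holds iff ($X_i=v_j\Rightarrow B_{i+1}=1$), ($X_i\neq v_j\Rightarrow B_i=B_{i+1}$), and ($B_i=0\Rightarrow X_i\neq v_k$). Then (a) an assignment to $X_1,\dots,X_n$ satisfies $\mathrm{Precedence}([v_j,v_k],[X_1,\dots,X_n])$ iff it extends to an assignment of $B_1,\dots,B_{n+1}$ with $B_1=0$ satisfying all $C(X_i,B_i,B_{i+1})$; and (b) if the domains are such that $D(B_1)=\{0\}$ and every constraint $C(X_i,B_i,B_{i+1})$, $1\le i\le n$, is GAC (with all domains nonempty), then $\mathrm{Precedence}([v_j,v_k],[X_1,\dots,X_n])$ is GAC on the domains of $X_1,\dots,X_n$.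
   Context: A support of a constraint is an assignment of a value from its domain to each of its variables that satisfies it; a constraint is GAC iff every value in every variable's domain belongs to some support. $\mathrm{Precedence}([a,b],[X_1,\dots,X_n])$ holds iff $\min\{i \mid X_i=a \text{ or } i=n+1\} < \min\{i \mid X_i=b \text{ or } i=n+2\}$. *)

(* Variables are indexed from 1 (as in the paper): an
   assignment to X_1..X_n is a function X : nat -> T of which only X 1..X n
   matter; an assignment to B_1..B_{n+1} is B : nat -> bool (0 = false,
   1 = true). *)
From mathcomp Require Import all_boot.
Set Implicit Arguments. Unset Strict Implicit. Unset Printing Implicit Defensive.

Definition first_idx (P : pred nat) (m : nat) : nat :=
  head m [seq i <- iota 1 m | P i || (i == m)].

Definition Precedence (T : eqType) (a b : T) (n : nat) (X : nat -> T) : bool :=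
  first_idx (fun i => (i <= n) && (X i == a)) n.+1 <
  first_idx (fun i => (i <= n) && (X i == b)) n.+2.

Definition Cprec (T : eqType) (vj vk : T) (x : T) (bi bi1 : bool) : bool :=
  [&& (x == vj) ==> bi1, (x != vj) ==> (bi == bi1) & (~~ bi) ==> (x != vk)].

Definition GAC_C (T : eqType) (vj vk : T) (dx : seq T) (db db' : seq bool) : Prop :=
  [/\ forall x, x \in dx -> exists2 b, b \in db & exists2 b', b' \in db' & Cprec vj vk x b b',
      forall b, b \in db -> exists2 x, x \in dx & exists2 b', b' \in db' & Cprec vj vk x b b'
    & forall b', b' \in db' -> exists2 x, x \in dx & exists2 b, b \in db & Cprec vj vk x b b'].

Definition prec_support (T : eqType) (a b : T) (n : nat) (DX : nat -> seq T)
  (X : nat -> T) : Prop :=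
  (forall i, 1 <= i <= n -> X i \in DX i) /\ Precedence a b n X.

Definition GAC_Prec (T : eqType) (a b : T) (n : nat) (DX : nat -> seq T) : Prop :=
  forall i, 1 <= i <= n -> forall v, v \in DX i ->
    exists X, prec_support a b n DX X /\ X i = v.

From mathcomp Require Import all_boot zify.

Set Implicit Arguments.
Unset Strict Implicit.
Unset Printing Implicit Defensive.

(* (a) Unfolding the first-index definition, Precedence says that every
   v_k at a position i is preceded by a v_j ([Precedence_seen]).  In a
   solution of the chain with B_1 = 0, the Boolean B_i is forced to mean
   "v_j occurs among X_1..X_{i-1}" ([seen], [Chain_seen]); under that
   reading C(X_i,B_i,B_{i+1}) says exactly "X_i = v_k implies v_j occurred
   before i" ([Cprec_seen]), giving [Precedence_decomposition].

   (b) Partial solutions of the chain on index intervals [a,c) can be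
   spliced at a shared B-value ([splice_Partial]).  GAC of every C grows a
   solution from B_1 = 0 up to any value of D(B_i) ([prefix_solution]) and
   from any value of D(B_i) to the end ([suffix_solution]).  Gluing both
   around a support of C(X_i,B_i,B_{i+1}) with X_i = v gives a full
   solution, i.e. by (a) a support of Precedence with X_i = v
   ([support_through]). *)

Lemma head_filter (A : Type) (d : A) (q : pred A) (s : seq A) :
  head d (filter q s) = nth d s (find q s).
Proof. by elim: s => //= x s IH; case: (q x). Qed.

Lemma first_idx_hit (P : pred nat) (m : nat) : 0 < m ->
  1 <= first_idx P m <= m /\ P (first_idx P m) || (first_idx P m == m).
Proof.
move=> m_gt0; set q := fun i => P i || (i == m).
have has_q : has q (iota 1 m).
  apply/hasP; exists m; last by rewrite /q eqxx orbT.
  by rewrite mem_iota m_gt0 add1n ltnSn.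
have find_lt : find q (iota 1 m) < m.
  by rewrite -[X in _ < X](size_iota 1 m) -has_find.
have q_hit := nth_find m has_q.
rewrite /first_idx head_filter nth_iota // add1n find_lt; split => //.
by move: q_hit; rewrite nth_iota // add1n.
Qed.

Lemma first_idx_min (P : pred nat) (m i : nat) :
  1 <= i <= m -> P i -> first_idx P m <= i.
Proof.
case: i => // i /andP[_ i_lt] Pi; set q := fun i => P i || (i == m).
have q_hit : q (nth m (iota 1 m) i) by rewrite nth_iota // add1n /q Pi.
have find_le : find q (iota 1 m) <= i.
  by rewrite leqNgt; apply/negP => /(before_find m); rewrite q_hit.
rewrite /first_idx head_filter nth_iota ?add1n ?ltnS //.
exact: leq_ltn_trans find_le i_lt.
Qed.

Section Decomposition.

Variables (T : eqType) (vj vk : T).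

Definition seen (X : nat -> T) (a : T) (i : nat) : bool :=
  has (fun l => (0 < l) && (X l == a)) (iota 0 i).

Lemma seenS (X : nat -> T) (a : T) (i : nat) : 0 < i ->
  seen X a i.+1 = seen X a i || (X i == a).
Proof.
by move=> i_gt0; rewrite /seen -[i.+1]addn1 iotaD has_cat /= i_gt0 orbF.
Qed.

Lemma seenP (X : nat -> T) (a : T) (i : nat) :
  reflect (exists2 l, 1 <= l < i & X l = a) (seen X a i).
Proof.
apply: (iffP hasP) => [[l] | [l /andP[l_gt0 l_lt] Xl]].
  by rewrite mem_iota add0n => /andP[_ l_lt] /andP[l_gt0 /eqP]; exists l;
    rewrite ?l_gt0.
by exists l; rewrite ?mem_iota ?l_gt0 ?Xl ?eqxx.
Qed.

Lemma Precedence_seen (n : nat) (X : nat -> T) :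
  Precedence vj vk n X <->
  (forall i, 1 <= i <= n -> X i = vk -> seen X vj i).
Proof.
rewrite /Precedence; set Pa := fun i => (i <= n) && (X i == vj).
set Pb := fun i => (i <= n) && (X i == vk).
have [/andP[fa_gt0 fa_le] Pa_fa] := @first_idx_hit Pa _ (ltn0Sn n).
have [/andP[fb_gt0 _] Pb_fb] := @first_idx_hit Pb _ (ltn0Sn n.+1).
split=> [fa_lt_fb i /andP[i_gt0 i_le] Xi | prec].
  have fb_le_i : first_idx Pb n.+2 <= i.
    by apply: first_idx_min; rewrite ?i_gt0 /Pb ?i_le ?Xi ?eqxx // !leqW.
  have fa_lt_i := leq_trans fa_lt_fb fb_le_i.
  move: Pa_fa; rewrite ltn_eqF ?(leq_trans fa_lt_i (leqW i_le)) // orbF.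
  case/andP=> _ /eqP Xa.
  by apply/seenP; exists (first_idx Pa n.+1); rewrite ?fa_gt0.
case/orP: Pb_fb => [/andP[fb_le_n /eqP Xb] | /eqP ->];
  last by rewrite ltnS fa_le.
have [|l /andP[l_gt0 l_lt] Xl] := seenP _ _ _ (prec _ _ Xb).
  by rewrite fb_gt0.
apply: (leq_ltn_trans _ l_lt); apply: first_idx_min; last first.
  by rewrite /Pa Xl eqxx (leq_trans (ltnW l_lt)).
by rewrite l_gt0 leqW // (leq_trans (ltnW l_lt)).
Qed.

Definition Chain (X : nat -> T) (B : nat -> bool) (a c : nat) : Prop :=
  forall l, a <= l < c -> Cprec vj vk (X l) (B l) (B l.+1).

Hypothesis vj_neq_vk : vj != vk.

(* Reading B_i as [seen X vj i], C(X_i,B_i,B_(i+1)) reduces to its third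
   conjunct: X_i = v_k forces an earlier v_j. *)
Lemma Cprec_seen (X : nat -> T) (i : nat) : 0 < i ->
  Cprec vj vk (X i) (seen X vj i) (seen X vj i.+1) =
  (X i == vk) ==> seen X vj i.
Proof.
move=> i_gt0; rewrite /Cprec seenS //.
case: eqP => [-> | _]; first by rewrite orbT (negbTE vj_neq_vk); case: seen.
by rewrite orbF; case: seen; case: (X i == vk).
Qed.

Lemma Chain_seen (n : nat) (X : nat -> T) (B : nat -> bool) :
  B 1 = false -> Chain X B 1 n.+1 ->
  forall i, 1 <= i <= n.+1 -> B i = seen X vj i.
Proof.
move=> B1 chain; elim=> // -[_ _ | i IH /andP[_ i_le]]; first by rewrite B1.
have Bi : B i.+1 = seen X vj i.+1 by apply: IH; rewrite (ltnW i_le).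
have /and3P[Cj Cnj _] : Cprec vj vk (X i.+1) (B i.+1) (B i.+2).
  by apply: chain; rewrite i_le.
rewrite seenS // -Bi; case: eqP Cj Cnj => /= [_ -> _ | _ _ /eqP <-].
  by rewrite orbT.
by rewrite orbF.
Qed.

Theorem Precedence_decomposition (n : nat) (X : nat -> T) :
  Precedence vj vk n X <-> exists B, B 1 = false /\ Chain X B 1 n.+1.
Proof.
apply: iff_trans (Precedence_seen n X) _.
split=> [prec | [B [B1 chain]] i /andP[i_gt0 i_le] Xi].
  exists (seen X vj); split=> // i /andP[i_gt0 i_le].
  by rewrite Cprec_seen //; apply/implyP => /eqP /prec; apply; rewrite i_gt0.
have /and3P[_ _] : Cprec vj vk (X i) (B i) (B i.+1).
  by apply: chain; rewrite i_gt0 ltnS.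
have -> : B i = seen X vj i by apply: (Chain_seen B1 chain); rewrite i_gt0 leqW.
by rewrite Xi eqxx implybF negbK.
Qed.

End Decomposition.

Section Gluing.

Variables (T : eqType) (vj vk : T) (DX : nat -> seq T).

Definition Partial (X : nat -> T) (B : nat -> bool) (a c : nat) : Prop :=
  Chain vj vk X B a c /\ forall l, a <= l < c -> X l \in DX l.

Definition splice (A : Type) (m : nat) (f g : nat -> A) : nat -> A :=
  fun l => if l < m then f l else g l.

Lemma splice_Partial (X1 X2 : nat -> T) (B1 B2 : nat -> bool) (a m c : nat) :
  Partial X1 B1 a m -> Partial X2 B2 m c -> B1 m = B2 m ->
  Partial (splice m X1 X2) (splice m.+1 B1 B2) a c.
Proof.
move=> [chain1 dom1] [chain2 dom2] Bm; rewrite /splice.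
split=> l /andP[a_le l_lt]; last first.
  by case: ltnP => [lt_lm | le_ml]; [apply: dom1 | apply: dom2];
    rewrite ?a_le ?le_ml.
rewrite !ltnS; case: (ltngtP l m) => [lt_lm | lt_ml | eq_lm].
- by apply: chain1; rewrite a_le.
- by apply: chain2; rewrite (ltnW lt_ml).
- by move: l_lt; rewrite eq_lm Bm => m_lt; apply: chain2; rewrite leqnn.
Qed.

Lemma single_Partial (i : nat) (x : T) (b b' : bool) :
  x \in DX i -> Cprec vj vk x b b' ->
  Partial (fun _ => x) (fun l => if l <= i then b else b') i i.+1.
Proof.
move=> x_in Cx; split=> l; rewrite -eqn_leq => /eqP <- //.
by rewrite leqnn ltnn.
Qed.

Variables (n : nat) (DB : nat -> seq bool).
Hypothesis DB1 : forall b, (b \in DB 1) = (b == false).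
Hypothesis GAC : forall i, 1 <= i <= n -> GAC_C vj vk (DX i) (DB i) (DB i.+1).

Lemma prefix_solution (i : nat) (b : bool) : 1 <= i <= n.+1 -> b \in DB i ->
  exists X B, [/\ B 1 = false, B i = b & Partial X B 1 i].
Proof.
elim: i b => // -[_ b _ | i IH b /andP[_ i_lt]] b_in.
  move: b_in; rewrite DB1 => /eqP ->; exists (fun _ => vj), (fun _ => false).
  by split=> //; split=> l /andP[l_gt0 l_lt]; move: (leq_trans l_gt0 l_lt).
have [_ _ supp_b] := @GAC i.+1 i_lt.
have [x x_in [b0 b0_in Cx]] := supp_b b b_in.
have [X [B [B1 Bi part]]] := IH b0 (ltnW i_lt) b0_in.
exists (splice i.+1 X (fun _ => x)),
  (splice i.+2 B (fun l => if l <= i.+1 then b0 else b)).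
split; rewrite /splice ?ltnn //.
by apply: splice_Partial (single_Partial x_in Cx) _; rewrite ?leqnn.
Qed.

Lemma suffix_solution (k i : nat) (b : bool) : 0 < i -> i + k = n.+1 ->
  b \in DB i -> exists X B, B i = b /\ Partial X B i n.+1.
Proof.
elim: k i b => [i b _ | k IH i b i_gt0 ik_eq b_in].
  rewrite addn0 => -> _; exists (fun _ => vj), (fun _ => b); split=> //.
  by split=> l /andP[l_ge l_lt]; move: (leq_trans l_lt l_ge); rewrite ltnn.
have [_ supp_b _] : GAC_C vj vk (DX i) (DB i) (DB i.+1) by apply: GAC; lia.
have [x x_in [b' b'_in Cx]] := supp_b b b_in.
have [X [B [Bi part]]] :=
  IH i.+1 b' (ltn0Sn i) (etrans (addSnnS i k) ik_eq) b'_in.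
exists (splice i.+1 (fun _ => x) X),
  (splice i.+2 (fun l => if l <= i then b else b') B).
split; first by rewrite /splice ltnW // leqnn.
apply: splice_Partial (single_Partial x_in Cx) part _.
by rewrite leqNgt ltnSn.
Qed.

Hypothesis vj_neq_vk : vj != vk.

Lemma Partial_support (X : nat -> T) (B : nat -> bool) :
  B 1 = false -> Partial X B 1 n.+1 -> prec_support vj vk n DX X.
Proof.
move=> B1 [chain dom]; split; first by move=> l l_range; apply: dom; lia.
by apply/(Precedence_decomposition vj_neq_vk); exists B.
Qed.

(* Every support of C(X_i,B_i,B_(i+1)) within the domains extends to a
   support of Precedence: glue a prefix solution, the support itself and a
   suffix solution. *)
Lemma support_through (i : nat) (v : T) (b b' : bool) :
  1 <= i <= n -> v \in DX i -> b \in DB i -> b' \in DB i.+1 ->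
  Cprec vj vk v b b' -> exists X, prec_support vj vk n DX X /\ X i = v.
Proof.
move=> /andP[i_gt0 i_le] v_in b_in b'_in Cv.
have [Xp [Bp [Bp1 Bpi prefix]]] : exists X B,
    [/\ B 1 = false, B i = b & Partial X B 1 i].
  by apply: prefix_solution b_in; lia.
have [Xs [Bs [Bsi suffix]]] : exists X B, B i.+1 = b' /\ Partial X B i.+1 n.+1.
  by apply: (suffix_solution (k := n - i)) b'_in => //; lia.
set B_v := fun l => if l <= i then b else b'.
have left_part : Partial (splice i Xp (fun _ => v)) (splice i.+1 Bp B_v) 1 i.+1.
  apply: splice_Partial prefix (single_Partial v_in Cv) _.
  by rewrite /B_v leqnn.
have B_mid : splice i.+1 Bp B_v i.+1 = Bs i.+1.
  by rewrite /splice /B_v ltnn leqNgt ltnSn.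
exists (splice i.+1 (splice i Xp (fun _ => v)) Xs); split; last first.
  by rewrite /splice ltnSn ltnn.
apply: Partial_support (splice_Partial left_part suffix B_mid).
by rewrite /splice ltnW // ltnS i_gt0.
Qed.

End Gluing.

Theorem mainTheorem7 (T : eqType) (vj vk : T) (hne : vj != vk) (n : nat) :
  (forall X : nat -> T,
     Precedence vj vk n X <->
     exists B : nat -> bool,
       B 1 = false /\ (forall i, 1 <= i <= n -> Cprec vj vk (X i) (B i) (B i.+1)))
  /\
  (forall (DX : nat -> seq T) (DB : nat -> seq bool),
     (forall b, (b \in DB 1) = (b == false)) ->
     (forall i, 1 <= i <= n -> DX i != [::]) ->
     (forall i, 1 <= i <= n.+1 -> DB i != [::]) ->
     (forall i, 1 <= i <= n -> GAC_C vj vk (DX i) (DB i) (DB i.+1)) ->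
     GAC_Prec vj vk n DX).
Proof.
split=> [X | DX DB DB1 _ _ GAC i i_range v v_in].
  exact: Precedence_decomposition.
have [supp_v _ _] := GAC i i_range.
have [b b_in [b' b'_in Cv]] := supp_v v v_in.
exact: (support_through DB1 GAC hne i_range v_in b_in b'_in Cv).
Qed.
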